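(* For $n\ge 3$, $a(n,1)=a(n-1,1)+n-1$.
   Context: For $n\ge 2$, $A_n$ is the alternating group on $\{1,\dots,n\}$, $T(A_n)=\{(1\,2)(i\,j)\mid 1\le i<j\le n\}$ (a generating set of $A_n$; note $(1\,2)(1\,2)=e$), and for $v\in A_n$, $\ell_{T(A_n)}(v)=\min\{k\ge 0\mid v=t_1\cdots t_k,\ t_i\in T(A_n)\}$. $a(n,m)$ denotes the number of $v\in A_n$ with $\ell_{T(A_n)}(v)=m$. *)

From HB Require Import structures.
Set Warnings "-notation-overridden".
From mathcomp Require Import all_boot all_order all_fingroup all_solvable.
Set Implicit Arguments. Unset Strict Implicit. Unset Printing Implicit Defensive.
Local Open Scope group_scope.

(* Points {1,...,n} are represented by 'I_n = {0,...,n-1}; the paper's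
   point 1 is the ordinal with value 0 and point 2 the one with value 1. *)

Definition An (n : nat) : {set {perm 'I_n}} := 'Alt_('I_n).

Definition TA (n : nat) : {set {perm 'I_n}} :=
  [set v | [exists p : 'I_n, exists q : 'I_n, exists i : 'I_n, exists j : 'I_n,
     [&& nat_of_ord p == 0%N, nat_of_ord q == 1%N, (i < j)%N
       & v == tperm p q * tperm i j]]].

Definition prodT (n k : nat) (v : {perm 'I_n}) : bool :=
  [exists s : k.-tuple {perm 'I_n},
     all (fun t => t \in TA n) s && (v == \prod_(t <- s) t)].

Definition lengthT_eq (n : nat) (v : {perm 'I_n}) (m : nat) : bool :=
  prodT m v && [forall k : 'I_m, ~~ prodT k v].

Definition a (n m : nat) : nat :=
  #|[set v in An n | lengthT_eq v m]|.

From mathcomp Require Import all_boot all_order all_fingroup all_solvable.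
From mathcomp Require Import zify.

Set Implicit Arguments.
Unset Strict Implicit.
Unset Printing Implicit Defensive.

(* The elements of length one are the generators other than the identity.
   Every generator (1 2)(i j) is even, and (i, j) |-> (1 2)(i j) is injective
   on pairs i < j, so there are C(n, 2) generators, one of which, (1 2)(1 2),
   is the identity.  Hence a(n, 1) = C(n, 2) - 1, and the recurrence is
   Pascal's rule C(n, 2) = C(n - 1, 2) + (n - 1). *)

Local Open Scope group_scope.

Lemma prodT0 n (v : {perm 'I_n}) : prodT 0 v = (v == 1).
Proof.
apply/existsP/eqP => [[s /andP[_ /eqP ->]]|->]; first by rewrite tuple0 big_nil.
by exists [tuple]; rewrite /= big_nil.
Qed.

Lemma prodT1 n (v : {perm 'I_n}) : prodT 1 v = (v \in TA n).
Proof.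
apply/existsP/idP => [[s /andP[]]|Tv].
  by case/tupleP: s => t s; rewrite tuple0 /= big_seq1 andbT => Tt /eqP ->.
by exists [tuple v]; rewrite /= andbT Tv big_seq1 eqxx.
Qed.

Lemma lengthT_eq1 n (v : {perm 'I_n}) :
  lengthT_eq v 1 = (v \in TA n) && (v != 1).
Proof.
rewrite /lengthT_eq prodT1; congr (_ && _).
apply/forallP/idP => [/(_ ord0)|nv1 k]; first by rewrite prodT0.
by rewrite ord1 prodT0.
Qed.

Lemma TA_sub_An n : TA n \subset An n.
Proof.
apply/subsetP => v; rewrite inE => /existsP[p /existsP[q /existsP[i /existsP[j]]]].
case/and4P => /eqP p0 /eqP q1 ltij /eqP ->.
rewrite /An Alt_even odd_mul_tperm !odd_tperm.
have -> : p != q by apply/eqP => epq; rewrite epq q1 in p0.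
by rewrite neq_ltn ltij.
Qed.

Lemma a_1E n : a n 1 = #|TA n :\ 1|.
Proof.
apply: eq_card => v; rewrite in_setD1 in_set lengthT_eq1.
case Tv: (v \in TA n); rewrite ?andbF //.
by rewrite (subsetP (TA_sub_An n)) // andbC.
Qed.

Lemma tperm_eq_pair (T : finType) (x y z w : T) :
  x != y -> tperm x y = tperm z w -> (x == z) || (x == w).
Proof.
move=> nxy exy; apply: contraR nxy => /norP[nxz nxw].
by rewrite -{1}(tpermL x y) exy tpermD // eq_sym.
Qed.

Lemma tperm_inj_ltn n (i j k l : 'I_n) : (i < j)%N -> (k < l)%N ->
  tperm i j = tperm k l -> i = k /\ j = l.
Proof.
move=> ltij ltkl eijkl.
have nij : i != j by rewrite neq_ltn ltij.
have nji : j != i by rewrite eq_sym.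
have /orP[/eqP ik|/eqP il] := tperm_eq_pair nij eijkl;
have /orP[/eqP jk|/eqP jl] := tperm_eq_pair nji (etrans (tpermC j i) eijkl);
  subst => //; try by rewrite ltnn in ltij.
by have := ltn_trans ltij ltkl; rewrite ltnn.
Qed.

Section CardTA.

Variable n : nat.

Let p : 'I_n.+2 := ord0.
Let q : 'I_n.+2 := lift ord0 ord0.
Let ltn_pairs := [set t : 2.-tuple 'I_n.+2 | sorted ltn [seq val i | i <- t]].
Let gen (t : 2.-tuple 'I_n.+2) := tperm p q * tperm (tnth t ord0) (tnth t ord_max).

Lemma TA_imset : TA n.+2 = gen @: ltn_pairs.
Proof.
apply/setP => v; apply/idP/imsetP.
  rewrite inE => /existsP[p' /existsP[q' /existsP[i /existsP[j]]]].
  case/and4P => /eqP p0 /eqP q1 ltij /eqP ->.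
  have -> : p' = p by apply: val_inj.
  have -> : q' = q by apply: val_inj.
  by exists [tuple i; j]; rewrite // inE /= ltij.
case=> t; rewrite inE => ltt ->; rewrite inE.
apply/existsP; exists p; apply/existsP; exists q.
apply/existsP; exists (tnth t ord0); apply/existsP; exists (tnth t ord_max).
rewrite /= eqxx andbT.
by case/tupleP: t ltt => x t; case/tupleP: t => y t; rewrite tuple0 /= andbT.
Qed.

Lemma gen_inj : {in ltn_pairs &, injective gen}.
Proof.
move=> t u; rewrite !inE => ltt ltu /mulgI.
case/tupleP: t ltt => x t; case/tupleP: t => y t; rewrite tuple0.
case/tupleP: u ltu => x' u; case/tupleP: u => y' u; rewrite tuple0 /= !andbT.
by move=> ltxy ltxy' /(tperm_inj_ltn ltxy' ltxy) [-> ->].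
Qed.

Lemma card_TA : #|TA n.+2| = 'C(n.+2, 2).
Proof. by rewrite TA_imset (card_in_imset gen_inj) card_ltn_sorted_tuples. Qed.

Lemma one_in_TA : 1 \in TA n.+2.
Proof.
rewrite TA_imset; apply/imsetP; exists [tuple p; q]; first by rewrite inE.
by rewrite /gen /= tperm2.
Qed.

Lemma a_1_bin : a n.+2 1 = 'C(n.+2, 2).-1.
Proof.
by have := cardsD1 1 (TA n.+2); rewrite one_in_TA card_TA add1n a_1E => ->.
Qed.

End CardTA.

Theorem proposition5p2 (n : nat) (hn : 3 <= n) : a n 1 = a n.-1 1 + n.-1.
Proof.
case: n hn => [|[|[|m]]] // _.
rewrite /= !a_1_bin binS bin1.
have : (0 < 'C(m.+2, 2))%N by rewrite bin_gt0.
lia.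
Qed.
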